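(* Let $S$ be a finite colored ordered set and let $(\sigma,v)\preceq(\pi,w)$ in $\mathcal Y(S)$. Write $\pi=(C_1,\dots,C_q)$, $w=w(1)\cdots w(q)$, and let $v_k$ be the restriction of the coloring $v$ to the blocks of $\sigma$ contained in $C_k$. Then there is an order isomorphism \[ \theta:[\sigma,\pi]\to Y_{v_1}^{w(1)}\times\cdots\times Y_{v_q}^{w(q)} \] (product order on the right) such that for each $\lambda\in[\sigma,\pi]$, $\lambda$ and $\theta(\lambda)=(\lambda_1,\dots,\lambda_q)$ are isomorphic colored ordered sets.
   Context: Fix a finite set of colors $\Gamma$. A colored ordered set is a finite linearly ordered set $S=(x_1<\dots<x_p)$ with a map $c_S:S\to\Gamma$, identified with the word $c_S(x_1)\cdots c_S(x_p)$; two are isomorphic if the (unique) order isomorphism between them preserves colors, i.e. they have the same color word. An (interval) partition of $S$ is a partition into nonempty blocks $B_1<\dots<B_q$ each of which is a set of consecutive elements. A colored partition $(\sigma,c_\sigma)$ of $S$ is an interval partition $\sigma=(B_1,\dots,B_q)$ together with a coloring $c_\sigma$ of its blocks such that every singleton block $\{x\}$ has color $c_S(x)$; it is regarded as the colored ordered set $(B_1<\dots<B_q)$ with coloring $c_\sigma$. $\mathcal Y(S)$ is the set of colored partitions of $S$, partially ordered by $(\sigma,v)\preceq(\pi,w)$ iff every block of $\sigma$ is contained in a block of $\pi$ and every block common to $\sigma$ and $\pi$ has the same color in both. $[\sigma,\pi]=\{\lambda:\sigma\preceq\lambda\preceq\pi\}$. For a word $v$ of length $p$ over $\Gamma$ and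 $j\in\Gamma$, consider $\mathcal Y(([p],v))$; let $\mathbf 0_v$ be the partition into singletons (colored by $v$) and $\mathbf 1_j$ the one-block partition colored $j$; $Y_v^j=[\mathbf 0_v,\mathbf 1_j]$. An element $\lambda_k\in Y_{v_k}^{w(k)}$ is a colored partition of the blocks of $\sigma$ inside $C_k$; $(\lambda_1,\dots,\lambda_q)$ is regarded as the colored ordered set obtained by concatenating the blocks of $\lambda_1,\dots,\lambda_q$ with their colors. *)

From mathcomp Require Import all_boot.
Set Implicit Arguments. Unset Strict Implicit. Unset Printing Implicit Defensive.

(* A finite colored ordered set S = (x_1 < ... < x_p) is represented (up to the
   unique order isomorphism) by its color word  c : seq Gamma, on the positions
   0, ..., p-1.

   An interval partition with block colors (a candidate colored partition) is a
   sequence of pairs (block length, block color), listed left to right.  *)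
Definition cpart (Gamma : Type) := seq (nat * Gamma).

Section Defs.
Variable Gamma : eqType.

Fixpoint blocks_from (s : nat) (P : cpart Gamma) : seq ((nat * nat) * Gamma) :=
  match P with
  | [::] => [::]
  | (l, g) :: P' => ((s, l), g) :: blocks_from (s + l) P'
  end.

Definition blocks (P : cpart Gamma) := blocks_from 0 P.

Definition is_cpart (c : seq Gamma) (P : cpart Gamma) : bool :=
  all (fun b => 0 < b.1) P && (sumn (map fst P) == size c) &&
  all (fun b => (b.1.2 == 1) ==> (b.2 == nth b.2 c b.1.1)) (blocks P).

Definition inside (I J : nat * nat) : bool :=
  (J.1 <= I.1) && (I.1 + I.2 <= J.1 + J.2).

Definition cp_le (P Q : cpart Gamma) : bool :=
  all (fun b => has (fun b' => inside b.1 b'.1) (blocks Q)) (blocks P) &&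
  all (fun b => all (fun b' => (b.1 == b'.1) ==> (b.2 == b'.2)) (blocks Q))
      (blocks P).

(* the colored ordered set underlying a colored partition: its color word *)
Definition cp_colors (P : cpart Gamma) : seq Gamma := map snd P.

Definition zero_cp (v : seq Gamma) : cpart Gamma := map (fun g => (1, g)) v.
Definition one_cp (v : seq Gamma) (j : Gamma) : cpart Gamma := [:: (size v, j)].

Definition in_Y (v : seq Gamma) (j : Gamma) (L : cpart Gamma) : bool :=
  [&& is_cpart v L, cp_le (zero_cp v) L & cp_le L (one_cp v j)].

Definition in_interval (c : seq Gamma) (sg pi L : cpart Gamma) : bool :=
  [&& is_cpart c L, cp_le sg L & cp_le L pi].

Definition restr_col (sg : cpart Gamma) (C : nat * nat) : seq Gamma :=
  [seq b.2 | b <- blocks sg & inside b.1 C].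

Definition in_prodY (sg pi : cpart Gamma) (Ls : seq (cpart Gamma)) : bool :=
  (size Ls == size pi) &&
  all2 (fun C L => in_Y (restr_col sg C.1) C.2 L) (blocks pi) Ls.

Definition prod_le (Ls Ms : seq (cpart Gamma)) : bool := all2 cp_le Ls Ms.

End Defs.

From mathcomp Require Import all_boot zify.
Set Implicit Arguments. Unset Strict Implicit. Unset Printing Implicit Defensive.

(* Since sigma <= lambda <= pi, every block of pi is a union of consecutive
   blocks of lambda, so lambda is the concatenation of its restrictions
   lambda_k to the blocks C_k of pi, and the order on [sigma, pi] is the
   product of the orders on the pieces.  Each lambda_k lies between the
   restriction sigma_k of sigma to C_k and the one-block partition of C_k
   colored w(k); merging the blocks of sigma_k according to a colored
   partition of its set of blocks identifies Y_{v_k}^{w(k)} with that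
   interval, order- and color-preservingly.  Finally the singleton-color
   condition of Y(S) is automatic above sigma: a singleton block of lambda is
   already a block of sigma, with the same color. *)

Lemma eq_all2_mapl (A B C : Type) (f : A -> B) (r : B -> C -> bool)
    (r' : A -> C -> bool) s t :
  r \o f =2 r' -> all2 r (map f s) t = all2 r' s t.
Proof. by move=> E; elim: s t => [|x s IH] [|y t] //=; rewrite IH -E. Qed.

Section ColoredPartitions.
Variable G : eqType.
Implicit Types (P Q S L M lam mu : cpart G).

Definition cp_len P := sumn (map fst P).
Definition cp_pos P := all (fun b => 0 < b.1) P.

Ltac lia_pairs :=
  repeat match goal with p : prod _ _ |- _ => destruct p end; simpl in *; lia.

Lemma cp_len_cons n g P : cp_len ((n, g) :: P) = n + cp_len P.
Proof. by []. Qed.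

Lemma cp_len1 n g : cp_len [:: (n, g)] = n.
Proof. exact: addn0. Qed.

Lemma cp_len_cat P Q : cp_len (P ++ Q) = cp_len P + cp_len Q.
Proof. by rewrite /cp_len map_cat sumn_cat. Qed.

Lemma cp_len_take j P : cp_len (take j P) <= cp_len P.
Proof. by rewrite -{2}(cat_take_drop j P) cp_len_cat leq_addr. Qed.

Lemma cp_len_drop j P : cp_len (drop j P) = cp_len P - cp_len (take j P).
Proof. by rewrite -{2}(cat_take_drop j P) cp_len_cat addKn. Qed.

Lemma cp_pos_cat P Q : cp_pos (P ++ Q) = cp_pos P && cp_pos Q.
Proof. exact: all_cat. Qed.

Lemma cp_pos_take_drop j P : cp_pos P -> cp_pos (take j P) /\ cp_pos (drop j P).
Proof. by rewrite -{1}(cat_take_drop j P) cp_pos_cat => /andP. Qed.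

Lemma cp_len_eq0 P : cp_pos P -> cp_len P = 0 -> P = [::].
Proof. by case: P => [|[a g] P] //= /andP[a_gt0 _]; rewrite cp_len_cons; lia. Qed.

Lemma cp_len_take_gt0 k P : cp_pos P -> 0 < k -> k <= size P -> 0 < cp_len (take k P).
Proof.
by case: P => [|[a g] P] //; case: k => // k /= /andP[a_gt0 _]; rewrite cp_len_cons; lia.
Qed.

Lemma blocks_from_cat s P Q :
  blocks_from s (P ++ Q) = blocks_from s P ++ blocks_from (s + cp_len P) Q.
Proof.
elim: P s => [|[a g] P IH] s /=; first by rewrite addn0.
by rewrite IH cp_len_cons addnA.
Qed.

Lemma mem_blocks_from s P b : b \in blocks_from s P ->
  s <= b.1.1 /\ b.1.1 + b.1.2 <= s + cp_len P.
Proof.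
case: b => [[x y] g0] /=; elim: P s => [|[a g] P IH] s //=.
by rewrite inE => /orP[/eqP [-> -> _]|/IH]; rewrite cp_len_cons; lia.
Qed.

Lemma blocks_from_pos s P b : cp_pos P -> b \in blocks_from s P -> 0 < b.1.2.
Proof.
elim: P s => [|[a g] P IH] s //= /andP[a_gt0 P_pos].
by rewrite inE => /orP[/eqP -> //|]; apply: IH.
Qed.

Lemma colors_blocks_from s P : map snd (blocks_from s P) = cp_colors P.
Proof. by elim: P s => [|[a g] P IH] s //=; rewrite IH. Qed.

Definition shift_block t (b : (nat * nat) * G) := ((b.1.1 + t, b.1.2), b.2).

Lemma blocks_from_shift s t P :
  blocks_from (s + t) P = map (shift_block t) (blocks_from s P).
Proof. by elim: P s => [|[a g] P IH] s //=; rewrite -IH /shift_block /= addnAC. Qed.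

Lemma inside_shift t I J : inside (I.1 + t, I.2) (J.1 + t, J.2) = inside I J.
Proof. by rewrite /inside /= leq_add2r addnAC [_ + t + _]addnAC leq_add2r. Qed.

Definition blocks_le (bP bQ : seq ((nat * nat) * G)) :=
  all (fun b => has (fun b' => inside b.1 b'.1) bQ) bP &&
  all (fun b => all (fun b' => (b.1 == b'.1) ==> (b.2 == b'.2)) bQ) bP.

Lemma blocks_le_shift t bP bQ :
  blocks_le (map (shift_block t) bP) (map (shift_block t) bQ) = blocks_le bP bQ.
Proof.
rewrite /blocks_le !all_map; congr andb; apply: eq_all => b /=.
  by rewrite has_map; apply: eq_has => b' /=; rewrite inside_shift.
by rewrite all_map; apply: eq_all => b' /=; rewrite !xpair_eqE eqn_add2r.
Qed.

Lemma blocks_le_from s P Q : blocks_le (blocks_from s P) (blocks_from s Q) = cp_le P Q.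
Proof. by rewrite -[s]add0n !blocks_from_shift blocks_le_shift. Qed.

Lemma separated_intervals n (I J : nat * nat) : I.1 + I.2 <= n -> n <= J.1 ->
  0 < I.2 -> 0 < J.2 -> [&& ~~ inside I J, ~~ inside J I & I != J].
Proof.
case: I J => [x y] [x' y'] /= *; rewrite /inside /= -[_ != _]negbK xpair_eqE.
apply/and3P; split; apply/negP; lia.
Qed.

(* Blocks left of [n] and blocks right of [n] are never nested, so the order
   can be checked on each side separately. *)
Lemma blocks_le_cat n bP1 bP2 bQ1 bQ2 :
  (forall b, b \in bP1 ++ bQ1 -> b.1.1 + b.1.2 <= n /\ 0 < b.1.2) ->
  (forall b, b \in bP2 ++ bQ2 -> n <= b.1.1 /\ 0 < b.1.2) ->
  blocks_le (bP1 ++ bP2) (bQ1 ++ bQ2) = blocks_le bP1 bQ1 && blocks_le bP2 bQ2.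
Proof.
move=> left right.
have sep b b' : b \in bP1 ++ bQ1 -> b' \in bP2 ++ bQ2 ->
    [&& ~~ inside b.1 b'.1, ~~ inside b'.1 b.1 & b.1 != b'.1].
  move=> /left [? ?] /right [? ?]; exact: (@separated_intervals n b.1 b'.1).
have in1 b : b \in bP1 -> b \in bP1 ++ bQ1 by rewrite mem_cat => ->.
have in1' b : b \in bQ1 -> b \in bP1 ++ bQ1 by rewrite mem_cat orbC => ->.
have in2 b : b \in bP2 -> b \in bP2 ++ bQ2 by rewrite mem_cat => ->.
have in2' b : b \in bQ2 -> b \in bP2 ++ bQ2 by rewrite mem_cat orbC => ->.
rewrite /blocks_le !all_cat andbACA; congr (_ && _ && (_ && _)); apply: eq_in_all.
- move=> b /in1 hb; rewrite has_cat; apply/orb_idr => /hasP[b' /in2' hb' hin].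
  by case/and3P: (sep _ _ hb hb'); rewrite hin.
- move=> b /in1 hb; rewrite all_cat; apply/andb_idr => _; apply/allP => b' /in2' hb'.
  by case/and3P: (sep _ _ hb hb') => _ _ /negPf ->.
- move=> b /in2 hb; rewrite has_cat; apply/orb_idl => /hasP[b' /in1' hb' hin].
  by case/and3P: (sep _ _ hb' hb); rewrite hin.
move=> b /in2 hb; rewrite all_cat; apply/andb_idl => _; apply/allP => b' /in1' hb'.
by case/and3P: (sep _ _ hb' hb) => _ _; rewrite eq_sym => /negPf ->.
Qed.

Lemma cp_le_cat P1 P2 Q1 Q2 : cp_pos P1 -> cp_pos P2 -> cp_pos Q1 -> cp_pos Q2 ->
  cp_len P1 = cp_len Q1 -> cp_le (P1 ++ P2) (Q1 ++ Q2) = cp_le P1 Q1 && cp_le P2 Q2.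
Proof.
move=> P1_pos P2_pos Q1_pos Q2_pos lenE.
rewrite -!(blocks_le_from 0) !blocks_from_cat -lenE.
rewrite (@blocks_le_cat (cp_len P1)) ?blocks_le_from // => b;
  rewrite mem_cat => /orP[] hb; have [? ?] := mem_blocks_from hb;
  (split; [lia | exact: blocks_from_pos hb]).
Qed.

Definition fits_block P (h : G) := if P is [:: (_, g)] then g == h else true.

Lemma cp_le_block P h : cp_pos P -> cp_le P [:: (cp_len P, h)] = fits_block P h.
Proof.
move=> P_pos; rewrite /cp_le /blocks /= (introT allP); last first.
  by move=> b /mem_blocks_from; rewrite /inside /= orbF; lia.
case: P P_pos => [|[a g] [|[a' g'] P]] //.
  by rewrite /= cp_len1 eqxx !andbT.
move=> /and3P[a_gt0 a'_gt0 _]; rewrite /= in a_gt0 a'_gt0.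
apply/allP => -[[x y] g0] hb; rewrite andbT xpair_eqE.
apply/implyP => /andP[/eqP x0 /eqP yE]; exfalso; rewrite !cp_len_cons in yE.
move: hb; rewrite /= !inE => /or3P[/eqP[? ? _] | /eqP[? ? _] | /mem_blocks_from /= []]; lia.
Qed.

Lemma cut_point s P t : s <= t <= s + cp_len P ->
  (forall b, b \in blocks_from s P -> (b.1.1 + b.1.2 <= t) || (t <= b.1.1)) ->
  exists2 j, j <= size P & s + cp_len (take j P) = t.
Proof.
elim: P s => [|[a g] P IH] s /=; first by rewrite addn0 => t_range _; exists 0 => //; lia.
move=> t_range no_straddle.
have [<-|s_neq_t] := eqVneq s t; first by exists 0; rewrite ?take0 ?addn0.
have /orP[] := no_straddle _ (mem_head _ _) => /= [head_le|]; last by lia.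
have [|b hb|j j_le tE] := IH (s + a); first by rewrite cp_len_cons in t_range; lia.
  by apply: no_straddle; rewrite inE hb orbT.
by exists j.+1; rewrite //= cp_len_cons addnA.
Qed.

Lemma cp_le_cons_split P m h Q : cp_pos P -> cp_pos Q -> 0 < m ->
  cp_len P = m + cp_len Q -> cp_le P ((m, h) :: Q) ->
  exists2 j, j <= size P &
    [/\ cp_len (take j P) = m, fits_block (take j P) h & cp_le (drop j P) Q].
Proof.
move=> P_pos Q_pos m_gt0 lenE le_PQ.
have [|b hb|j j_le lenj] := @cut_point 0 P m; first by rewrite lenE; lia.
  move: le_PQ => /andP[/allP/(_ b hb) covered _].
  have [b_end _] := mem_blocks_from hb.
  case/orP: covered => [/andP[_ /= ?]|/hasP[b' /mem_blocks_from[b'_start _] /andP[? _]]].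
    by apply/orP; left; lia_pairs.
  by apply/orP; right; lia_pairs.
exists j => //; rewrite add0n in lenj.
have [Pl_pos Pr_pos] := cp_pos_take_drop j P_pos.
move: le_PQ; rewrite -{1}(cat_take_drop j P) -cat1s cp_le_cat ?lenj /cp_pos /= ?andbT ?cp_len1 //.
by rewrite -{1}lenj cp_le_block // => /andP[].
Qed.

Lemma cp_le_cons_join P1 P2 h Q : cp_pos P1 -> cp_pos P2 -> cp_pos Q -> 0 < cp_len P1 ->
  fits_block P1 h -> cp_le P2 Q -> cp_le (P1 ++ P2) ((cp_len P1, h) :: Q).
Proof.
move=> P1_pos P2_pos Q_pos len_gt0 fits le2.
by rewrite -cat1s cp_le_cat /cp_pos /= ?andbT ?cp_len1 // cp_le_block // fits.
Qed.

(* [lam] is a colored partition of the set of blocks of [S]; [coarsen S lam]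
   merges the blocks of [S] accordingly, and [on_blocks] inverts it, with
   [nblocks l S] the number of leading blocks of [S] of total length [l]. *)
Fixpoint coarsen S lam : cpart G :=
  match lam with
  | [::] => [::]
  | (k, g) :: lam' => (cp_len (take k S), g) :: coarsen (drop k S) lam'
  end.

Fixpoint nblocks (l : nat) S : nat :=
  match S with
  | [::] => 0
  | (a, _) :: S' => if l == 0 then 0 else (nblocks (l - a) S').+1
  end.

Fixpoint on_blocks S L : cpart G :=
  match L with
  | [::] => [::]
  | (l, g) :: L' => (nblocks l S, g) :: on_blocks (drop (nblocks l S) S) L'
  end.

Lemma colors_on_blocks S L : cp_colors (on_blocks S L) = cp_colors L.
Proof. by elim: L S => [|[l g] L IH] S //=; rewrite /cp_colors /= -!/(cp_colors _) IH. Qed.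

Lemma fits_block_coarsen S lam h : fits_block (coarsen S lam) h = fits_block lam h.
Proof. by case: lam => [|[k g] [|[? ?] ?]]. Qed.

Lemma cp_len_coarsen S lam : cp_len (coarsen S lam) = cp_len (take (cp_len lam) S).
Proof.
elim: lam S => [|[k g] lam IH] S /=; first by rewrite take0.
by rewrite cp_len_cons IH cp_len_cons takeD cp_len_cat.
Qed.

Lemma cp_pos_coarsen S lam : cp_pos S -> cp_pos lam -> cp_len lam <= size S ->
  cp_pos (coarsen S lam).
Proof.
elim: lam S => [|[k g] lam IH] S //= S_pos /andP[k_gt0 lam_pos]; rewrite cp_len_cons => len_le.
rewrite cp_len_take_gt0 //=; last by lia.
apply: IH => //; first by have [] := cp_pos_take_drop k S_pos.
by rewrite size_drop; lia.
Qed.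

Lemma coarsen_cat S lam1 lam2 :
  coarsen S (lam1 ++ lam2) = coarsen S lam1 ++ coarsen (drop (cp_len lam1) S) lam2.
Proof.
elim: lam1 S => [|[k g] lam1 IH] S /=; first by rewrite drop0.
by rewrite IH drop_drop cp_len_cons addnC.
Qed.

Lemma take_coarsen j S lam : take j (coarsen S lam) = coarsen S (take j lam).
Proof. by elim: lam S j => [|[k g] lam IH] S [|j] //=; rewrite IH. Qed.

Lemma drop_coarsen j S lam :
  drop j (coarsen S lam) = coarsen (drop (cp_len (take j lam)) S) (drop j lam).
Proof.
elim: lam S j => [|[k g] lam IH] S [|j] //=; rewrite ?take0 ?drop0 //.
by rewrite IH drop_drop cp_len_cons addnC.
Qed.

Lemma coarsen_zero S : coarsen S (zero_cp (cp_colors S)) = S.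
Proof. by elim: S => [|[a g] S IH] //=; rewrite take0 drop0 IH cp_len1. Qed.

Lemma nblocks_take k S : cp_pos S -> k <= size S -> nblocks (cp_len (take k S)) S = k.
Proof.
elim: S k => [|[a g] S IH] [|k] //= /andP[a_gt0 S_pos] k_le.
by rewrite cp_len_cons (_ : (a + _ == 0) = false) ?addKn ?IH //; apply/eqP; lia.
Qed.

Lemma nblocks_cat S1 S2 : cp_pos S1 -> cp_pos S2 -> nblocks (cp_len S1) (S1 ++ S2) = size S1.
Proof.
move=> S1_pos S2_pos; rewrite -{1}(take_size_cat S2 (erefl (size S1))).
by rewrite nblocks_take ?cp_pos_cat ?S1_pos // size_cat leq_addr.
Qed.

Lemma cp_len_take_inj S i j : cp_pos S -> i <= size S -> j <= size S ->
  cp_len (take i S) = cp_len (take j S) -> i = j.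
Proof. by move=> S_pos i_le j_le lenE; rewrite -(nblocks_take S_pos i_le) lenE nblocks_take. Qed.

Lemma coarsenK S lam : cp_pos S -> cp_pos lam -> cp_len lam <= size S ->
  on_blocks S (coarsen S lam) = lam.
Proof.
elim: lam S => [|[k g] lam IH] S //= S_pos /andP[k_gt0 lam_pos]; rewrite cp_len_cons => len_le.
rewrite nblocks_take //; last by lia.
rewrite IH //; first by have [] := cp_pos_take_drop k S_pos.
by rewrite size_drop; lia.
Qed.

Lemma coarsen_surj S L : cp_pos S -> cp_pos L -> cp_len L = cp_len S -> cp_le S L ->
  exists lam, [/\ cp_pos lam, cp_len lam = size S & L = coarsen S lam].
Proof.
elim: L S => [|[l g] L IH] S S_pos /= L_pos lenE le_SL.
  by exists [::]; rewrite (cp_len_eq0 S_pos).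
case/andP: L_pos => l_gt0 L_pos.
have [j j_le [lenj _ le2]] := cp_le_cons_split S_pos L_pos l_gt0 (esym lenE) le_SL.
have [_ S2_pos] := cp_pos_take_drop j S_pos.
have [|lam [lam_pos lam_len ->]] := IH _ S2_pos L_pos _ le2.
  by rewrite cp_len_drop lenj -lenE cp_len_cons addKn.
exists ((j, g) :: lam); split; last by rewrite /= lenj.
- rewrite /= lam_pos andbT lt0n; apply: contraTneq l_gt0 => j0.
  by rewrite -lenj j0 take0.
by rewrite cp_len_cons lam_len size_drop subnKC.
Qed.

Lemma coarsen_mono S lam mu : cp_pos S -> cp_pos lam -> cp_pos mu ->
  cp_len lam = size S -> cp_len mu = size S ->
  cp_le lam mu -> cp_le (coarsen S lam) (coarsen S mu).
Proof.
elim: mu S lam => [|[k h] mu IH] S lam S_pos lam_pos /= mu_pos lam_len mu_len le_lm.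
  by rewrite (cp_len_eq0 lam_pos) // lam_len -mu_len.
case/andP: mu_pos => k_gt0 mu_pos; rewrite cp_len_cons in mu_len.
have [j _ [lenj fits le2]] := cp_le_cons_split lam_pos mu_pos k_gt0 (etrans lam_len (esym mu_len)) le_lm.
have [lam1_pos lam2_pos] := cp_pos_take_drop j lam_pos.
have [_ S2_pos] := cp_pos_take_drop k S_pos.
have lam2_len : cp_len (drop j lam) = size (drop k S).
  by rewrite cp_len_drop lenj lam_len size_drop.
rewrite -(cat_take_drop j lam) coarsen_cat lenj.
have -> : cp_len (take k S) = cp_len (coarsen S (take j lam)) by rewrite cp_len_coarsen lenj.
apply: cp_le_cons_join.
- by apply: cp_pos_coarsen; rewrite // lenj; lia.
- by apply: cp_pos_coarsen; rewrite // lam2_len.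
- by apply: cp_pos_coarsen; rewrite // size_drop; lia.
- by rewrite cp_len_coarsen lenj; apply: cp_len_take_gt0 => //; lia.
- by rewrite fits_block_coarsen.
by apply: IH; rewrite // size_drop; lia.
Qed.

Lemma coarsen_le_reflect S lam mu : cp_pos S -> cp_pos lam -> cp_pos mu ->
  cp_len lam = size S -> cp_len mu = size S ->
  cp_le (coarsen S lam) (coarsen S mu) -> cp_le lam mu.
Proof.
elim: mu S lam => [|[k h] mu IH] S lam S_pos lam_pos /= mu_pos lam_len mu_len le_c.
  by rewrite (cp_len_eq0 lam_pos) // lam_len -mu_len.
case/andP: mu_pos => k_gt0 mu_pos; rewrite cp_len_cons in mu_len.
have k_le : k <= size S by lia.
have [_ S2_pos] := cp_pos_take_drop k S_pos.
have mu_len' : cp_len mu = size (drop k S) by rewrite size_drop; lia.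
have [|||j j_le [lenj fits le2]] := cp_le_cons_split _ _ (cp_len_take_gt0 S_pos k_gt0 k_le) _ le_c.
- by apply: cp_pos_coarsen; rewrite // lam_len.
- by apply: cp_pos_coarsen; rewrite // mu_len'.
- by rewrite !cp_len_coarsen lam_len mu_len' !take_size -cp_len_cat cat_take_drop.
move: lenj fits le2; rewrite take_coarsen drop_coarsen cp_len_coarsen fits_block_coarsen.
have lenj_le : cp_len (take j lam) <= size S by rewrite -lam_len cp_len_take.
move=> /(cp_len_take_inj S_pos lenj_le k_le) lenj fits; rewrite lenj => le2.
have [lam1_pos lam2_pos] := cp_pos_take_drop j lam_pos.
rewrite -(cat_take_drop j lam) -lenj cp_le_cons_join //; first by rewrite lenj.
by apply: IH le2; rewrite // cp_len_drop lenj lam_len size_drop.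
Qed.

Definition singletons_ok s (c : seq G) P :=
  all (fun b => (b.1.2 == 1) ==> (b.2 == nth b.2 c b.1.1)) (blocks_from s P).

Lemma is_cpartE c P : is_cpart c P = [&& cp_pos P, cp_len P == size c & singletons_ok 0 c P].
Proof. by rewrite /is_cpart andbA. Qed.

Lemma cp_len_eq1 P : cp_pos P -> cp_len P = 1 -> exists g, P = [:: (1, g)].
Proof.
case: P => [|[a g] [|[a' g'] P]] //=; first by rewrite /cp_len /= addn0 => _ ->; exists g.
by move=> /and3P[a_gt0 a'_gt0 _]; rewrite !cp_len_cons; lia.
Qed.

Lemma singletons_ok_coarser s c S L : cp_pos S -> cp_pos L -> cp_len S = cp_len L ->
  cp_le S L -> singletons_ok s c S -> singletons_ok s c L.
Proof.
elim: L S s => [|[l g] L IH] S s // S_pos /= /andP[l_gt0 L_pos] lenE le_SL.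
have [j _ [lenj fits le2]] := cp_le_cons_split S_pos L_pos l_gt0 lenE le_SL.
have [S1_pos S2_pos] := cp_pos_take_drop j S_pos.
rewrite /singletons_ok -(cat_take_drop j S) blocks_from_cat all_cat lenj.
case/andP => ok1 ok2; apply/andP; split.
  rewrite /=; apply/implyP => /eqP l1; move: lenj fits ok1; rewrite l1 => /(cp_len_eq1 S1_pos)[g' ->].
  by rewrite /= andbT => /eqP ->.
apply: IH ok2 => //; by rewrite cp_len_drop lenj lenE cp_len_cons addKn.
Qed.

Lemma cp_pos_zero (v : seq G) : cp_pos (zero_cp v).
Proof. by elim: v. Qed.

Lemma cp_len_zero (v : seq G) : cp_len (zero_cp v) = size v.
Proof. by elim: v => //= g v IH; rewrite cp_len_cons IH. Qed.

Lemma singletons_ok_zero (u v : seq G) : singletons_ok (size u) (u ++ v) (zero_cp v).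
Proof.
elim: v u => [|g v IH] u //=.
rewrite /singletons_ok /= nth_cat ltnn subnn eqxx /=.
by have := IH (rcons u g); rewrite size_rcons cat_rcons addn1.
Qed.

Definition in_cp_interval S P L :=
  [&& cp_pos L, cp_len L == cp_len P, cp_le S L & cp_le L P].

Lemma in_intervalE c S P L : is_cpart c S -> is_cpart c P ->
  in_interval c S P L = in_cp_interval S P L.
Proof.
rewrite !is_cpartE => /and3P[S_pos /eqP S_len S_ok] /and3P[_ /eqP P_len _].
rewrite /in_interval /in_cp_interval is_cpartE P_len.
apply/idP/idP => [/and3P[/and3P[-> -> _] -> ->] //|/and4P[L_pos /eqP L_len le_SL le_LP]].
by rewrite L_pos L_len eqxx le_SL le_LP (singletons_ok_coarser S_pos L_pos) ?S_len.
Qed.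

Lemma in_cp_interval_cat S1 S2 P1 P2 L1 L2 :
  cp_pos S1 -> cp_pos S2 -> cp_pos P1 -> cp_pos P2 -> cp_pos L1 -> cp_pos L2 ->
  cp_len S1 = cp_len P1 -> cp_len L1 = cp_len P1 ->
  in_cp_interval (S1 ++ S2) (P1 ++ P2) (L1 ++ L2) =
  in_cp_interval S1 P1 L1 && in_cp_interval S2 P2 L2.
Proof.
move=> S1_pos S2_pos P1_pos P2_pos L1_pos L2_pos lenSP lenLP.
rewrite /in_cp_interval cp_pos_cat !cp_len_cat !cp_le_cat ?lenSP ?lenLP // L1_pos L2_pos.
by rewrite eqxx eqn_add2l; case: (_ == _); do 4!case: cp_le.
Qed.

Lemma in_cp_interval_cons S1 S2 h P L :
  cp_pos S1 -> cp_pos S2 -> cp_pos P -> 0 < cp_len S1 ->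
  in_cp_interval (S1 ++ S2) ((cp_len S1, h) :: P) L ->
  exists L1 L2, [/\ L = L1 ++ L2, cp_len L1 = cp_len S1,
    in_cp_interval S1 [:: (cp_len S1, h)] L1 & in_cp_interval S2 P L2].
Proof.
move=> S1_pos S2_pos P_pos len_gt0 intL.
have /and4P[L_pos /eqP L_len _ le_LP] := intL.
have [j _ [lenj _ _]] := cp_le_cons_split L_pos P_pos len_gt0 L_len le_LP.
have [L1_pos L2_pos] := cp_pos_take_drop j L_pos.
have /andP[int1 int2] :
    in_cp_interval S1 [:: (cp_len S1, h)] (take j L) && in_cp_interval S2 P (drop j L).
  by rewrite -in_cp_interval_cat ?cat_take_drop ?cp_len_cons ?addn0 //= len_gt0.
by exists (take j L), (drop j L); rewrite cat_take_drop.
Qed.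

Lemma coarsen_le S lam mu : cp_pos S -> cp_pos lam -> cp_pos mu ->
  cp_len lam = size S -> cp_len mu = size S ->
  cp_le (coarsen S lam) (coarsen S mu) = cp_le lam mu.
Proof. by move=> *; apply/idP/idP; [apply: coarsen_le_reflect | apply: coarsen_mono]. Qed.

Lemma in_Y_coarsen S h lam : cp_pos S -> cp_pos lam -> cp_len lam = size S ->
  in_Y (cp_colors S) h lam = in_cp_interval S [:: (cp_len S, h)] (coarsen S lam).
Proof.
move=> S_pos lam_pos lam_len.
have zero_len : cp_len (zero_cp (cp_colors S)) = size S by rewrite cp_len_zero size_map.
have le_zero : cp_le (zero_cp (cp_colors S)) lam = cp_le S (coarsen S lam).
  by rewrite -{2}(coarsen_zero S) coarsen_le // cp_pos_zero.
have le_one : cp_le lam (one_cp (cp_colors S) h) = fits_block lam h.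
  by rewrite /one_cp size_map -lam_len cp_le_block.
have lenC : cp_len (coarsen S lam) = cp_len S by rewrite cp_len_coarsen lam_len take_size.
have C_pos : cp_pos (coarsen S lam) by rewrite cp_pos_coarsen ?lam_len.
rewrite /in_Y /in_cp_interval le_zero le_one C_pos cp_len1 -lenC eqxx cp_le_block //.
rewrite fits_block_coarsen /=.
have [le_SL|] := boolP (cp_le S (coarsen S lam)); last by rewrite andbF.
suff -> : is_cpart (cp_colors S) lam by [].
rewrite is_cpartE lam_pos lam_len size_map eqxx /=.
apply: (singletons_ok_coarser (cp_pos_zero (cp_colors S)) lam_pos).
- by rewrite zero_len.
- by rewrite le_zero.
exact: (singletons_ok_zero [::]).
Qed.

Section BlockInterval.
Variables (S : cpart G) (h : G).
Hypothesis S_pos : cp_pos S.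

Lemma in_block_coarsen L : in_cp_interval S [:: (cp_len S, h)] L ->
  exists lam, [/\ cp_pos lam, cp_len lam = size S & L = coarsen S lam].
Proof.
case/and4P=> L_pos /eqP L_len le_SL _.
by apply: coarsen_surj; rewrite // L_len cp_len1.
Qed.

Lemma on_blocks_in_Y L : in_cp_interval S [:: (cp_len S, h)] L ->
  in_Y (cp_colors S) h (on_blocks S L) /\ coarsen S (on_blocks S L) = L.
Proof.
move=> intL; have [lam [lam_pos lam_len LE]] := in_block_coarsen intL.
by rewrite LE coarsenK ?lam_len // in_Y_coarsen // -LE.
Qed.

Lemma coarsen_in_block lam : in_Y (cp_colors S) h lam ->
  in_cp_interval S [:: (cp_len S, h)] (coarsen S lam) /\ on_blocks S (coarsen S lam) = lam.
Proof.
move=> Ylam; have /and3P[] := Ylam; rewrite is_cpartE size_map => /and3P[lam_pos /eqP lam_len _] _ _.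
by rewrite coarsenK ?lam_len // -in_Y_coarsen.
Qed.

Lemma on_blocks_le L M : in_cp_interval S [:: (cp_len S, h)] L -> in_cp_interval S [:: (cp_len S, h)] M ->
  cp_le (on_blocks S L) (on_blocks S M) = cp_le L M.
Proof.
move=> /in_block_coarsen[lam [lam_pos lam_len ->]] /in_block_coarsen[mu [mu_pos mu_len ->]].
by rewrite !coarsenK ?lam_len ?mu_len // coarsen_le.
Qed.

End BlockInterval.

Lemma restr_col_cat_head S1 S2 : cp_pos S1 -> cp_pos S2 ->
  restr_col (S1 ++ S2) (0, cp_len S1) = cp_colors S1.
Proof.
move=> S1_pos S2_pos; rewrite /restr_col /blocks blocks_from_cat filter_cat map_cat.
rewrite [filter _ (blocks_from _ S2)](eq_in_filter (a2 := pred0)) ?filter_pred0 ?cats0; last first.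
  move=> b hb; have [? ?] := mem_blocks_from hb; have := blocks_from_pos S2_pos hb.
  by rewrite /inside /=; lia_pairs.
rewrite (eq_in_filter (a2 := predT)) ?filter_predT ?colors_blocks_from //.
by move=> b /mem_blocks_from; rewrite /inside /=; lia_pairs.
Qed.

Lemma restr_col_cat_shift S1 S2 (I : nat * nat) : cp_pos S1 -> cp_pos S2 ->
  restr_col (S1 ++ S2) (I.1 + cp_len S1, I.2) = restr_col S2 I.
Proof.
move=> S1_pos S2_pos; rewrite /restr_col /blocks blocks_from_cat filter_cat map_cat.
rewrite [filter _ (blocks_from _ S1)](eq_in_filter (a2 := pred0)) ?filter_pred0 /=; last first.
  move=> b hb; have [? ?] := mem_blocks_from hb; have := blocks_from_pos S1_pos hb.
  by rewrite /inside /=; lia_pairs.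
rewrite -[cp_len S1]add0n blocks_from_shift filter_map -map_comp.
by congr map; apply: eq_filter => b /=; rewrite inside_shift.
Qed.

Lemma in_prodY_cons S1 S2 h P lam Ls : cp_pos S1 -> cp_pos S2 ->
  in_prodY (S1 ++ S2) ((cp_len S1, h) :: P) (lam :: Ls) =
  in_Y (cp_colors S1) h lam && in_prodY S2 P Ls.
Proof.
move=> S1_pos S2_pos; rewrite /in_prodY /blocks /= eqSS restr_col_cat_head //.
rewrite -[cp_len S1]add0n blocks_from_shift andbCA.
rewrite (@eq_all2_mapl _ _ _ _ _ (fun C L => in_Y (restr_col S2 C.1) C.2 L)) //.
by move=> C L /=; rewrite restr_col_cat_shift.
Qed.

Fixpoint theta S P L : seq (cpart G) :=
  match P with
  | [::] => [::]
  | (m, _) :: P' => on_blocks (take (nblocks m S) S) (take (nblocks m L) L)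
                    :: theta (drop (nblocks m S) S) P' (drop (nblocks m L) L)
  end.

Fixpoint theta_inv S P (Ls : seq (cpart G)) : cpart G :=
  match P, Ls with
  | (m, _) :: P', lam :: Ls' =>
      coarsen (take (nblocks m S) S) lam ++ theta_inv (drop (nblocks m S) S) P' Ls'
  | _, _ => [::]
  end.

Lemma theta_cons S1 S2 h P L1 L2 : cp_pos S1 -> cp_pos S2 -> cp_pos L1 -> cp_pos L2 ->
  cp_len L1 = cp_len S1 ->
  theta (S1 ++ S2) ((cp_len S1, h) :: P) (L1 ++ L2) = on_blocks S1 L1 :: theta S2 P L2.
Proof.
move=> S1_pos S2_pos L1_pos L2_pos lenE /=.
by rewrite nblocks_cat // -lenE nblocks_cat // !take_size_cat // !drop_size_cat.
Qed.

Lemma theta_inv_cons S1 S2 h P lam Ls : cp_pos S1 -> cp_pos S2 ->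
  theta_inv (S1 ++ S2) ((cp_len S1, h) :: P) (lam :: Ls) = coarsen S1 lam ++ theta_inv S2 P Ls.
Proof. by move=> S1_pos S2_pos /=; rewrite nblocks_cat // take_size_cat // drop_size_cat. Qed.

Definition theta_spec S P := [/\
  forall L, in_cp_interval S P L ->
    in_prodY S P (theta S P L) /\ theta_inv S P (theta S P L) = L,
  forall Ls, in_prodY S P Ls ->
    in_cp_interval S P (theta_inv S P Ls) /\ theta S P (theta_inv S P Ls) = Ls,
  forall L M, in_cp_interval S P L -> in_cp_interval S P M ->
    cp_le L M = prod_le (theta S P L) (theta S P M) &
  forall L, in_cp_interval S P L -> cp_colors L = flatten (map (@cp_colors G) (theta S P L))].

Lemma theta_spec_nil : theta_spec [::] [::].
Proof.
have nil_only L : in_cp_interval [::] [::] L -> L = [::].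
  by case/and4P=> L_pos /eqP L_len _ _; apply: cp_len_eq0.
split=> [L /nil_only -> | [|? ?] // | L M /nil_only -> /nil_only -> | L /nil_only ->] //.
Qed.

Lemma in_cp_interval_pos S P L : in_cp_interval S P L -> cp_pos L.
Proof. by case/and4P. Qed.

Section ThetaCons.
Variables (S1 S2 : cpart G) (h : G) (P : cpart G).
Hypotheses (S1_pos : cp_pos S1) (S2_pos : cp_pos S2) (P_pos : cp_pos P).
Hypothesis len_gt0 : 0 < cp_len S1.
Hypothesis IH : theta_spec S2 P.

Local Notation Sg := (S1 ++ S2).
Local Notation Pi := ((cp_len S1, h) :: P).

Lemma in_cp_interval_cons_cat L1 L2 :
  cp_pos L1 -> cp_pos L2 -> cp_len L1 = cp_len S1 ->
  in_cp_interval Sg Pi (L1 ++ L2) =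
  in_cp_interval S1 [:: (cp_len S1, h)] L1 && in_cp_interval S2 P L2.
Proof. by move=> *; rewrite -cat1s in_cp_interval_cat ?cp_len1 //= len_gt0. Qed.

Lemma theta_cons_in_prodY L : in_cp_interval Sg Pi L ->
  in_prodY Sg Pi (theta Sg Pi L) /\ theta_inv Sg Pi (theta Sg Pi L) = L.
Proof.
case/(in_cp_interval_cons S1_pos S2_pos P_pos len_gt0)=> L1 [L2 [-> lenL1 int1 int2]].
have [[Y1 K1] [IH1 _ _ _]] := (on_blocks_in_Y S1_pos int1, IH).
have [Y2 K2] := IH1 L2 int2.
rewrite theta_cons ?(in_cp_interval_pos int1) ?(in_cp_interval_pos int2) //.
by rewrite in_prodY_cons // Y1 Y2 theta_inv_cons // K1 K2.
Qed.

Lemma theta_inv_cons_in_interval Ls : in_prodY Sg Pi Ls ->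
  in_cp_interval Sg Pi (theta_inv Sg Pi Ls) /\ theta Sg Pi (theta_inv Sg Pi Ls) = Ls.
Proof.
case: Ls => [|lam Ls]; first by case/andP.
rewrite in_prodY_cons // => /andP[Ylam YLs].
have [[int1 K1] [_ IH2 _ _]] := (coarsen_in_block S1_pos Ylam, IH).
have [int2 K2] := IH2 Ls YLs.
have [pos1 pos2] := (in_cp_interval_pos int1, in_cp_interval_pos int2).
have lenC : cp_len (coarsen S1 lam) = cp_len S1.
  by case/and4P: int1 => _ /eqP -> _ _; rewrite cp_len1.
by rewrite theta_inv_cons // in_cp_interval_cons_cat ?int1 ?int2 // theta_cons // K1 K2.
Qed.

Lemma theta_cons_le L M : in_cp_interval Sg Pi L -> in_cp_interval Sg Pi M ->
  cp_le L M = prod_le (theta Sg Pi L) (theta Sg Pi M).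
Proof.
case/(in_cp_interval_cons S1_pos S2_pos P_pos len_gt0)=> L1 [L2 [-> lenL1 intL1 intL2]].
case/(in_cp_interval_cons S1_pos S2_pos P_pos len_gt0)=> M1 [M2 [-> lenM1 intM1 intM2]].
have [_ _ IH3 _] := IH.
have [posL1 posL2] := (in_cp_interval_pos intL1, in_cp_interval_pos intL2).
have [posM1 posM2] := (in_cp_interval_pos intM1, in_cp_interval_pos intM2).
rewrite !theta_cons // cp_le_cat ?lenL1 ?lenM1 //.
by rewrite /prod_le /= -/(prod_le _ _) -IH3 // (on_blocks_le S1_pos intL1 intM1).
Qed.

Lemma theta_cons_colors L : in_cp_interval Sg Pi L ->
  cp_colors L = flatten (map (@cp_colors G) (theta Sg Pi L)).
Proof.
case/(in_cp_interval_cons S1_pos S2_pos P_pos len_gt0)=> L1 [L2 [-> lenL1 int1 int2]].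
have [_ _ _ IH4] := IH.
rewrite theta_cons ?(in_cp_interval_pos int1) ?(in_cp_interval_pos int2) //=.
by rewrite colors_on_blocks -IH4 // /cp_colors map_cat.
Qed.

Lemma theta_spec_cons : theta_spec Sg Pi.
Proof.
split; [exact: theta_cons_in_prodY | exact: theta_inv_cons_in_interval
       | exact: theta_cons_le | exact: theta_cons_colors].
Qed.

End ThetaCons.

Lemma theta_spec_of_le S P : cp_pos S -> cp_pos P -> cp_len S = cp_len P -> cp_le S P ->
  theta_spec S P.
Proof.
elim: P S => [|[m h] P IH] S S_pos /= P_pos lenE le_SP.
  by rewrite (cp_len_eq0 S_pos lenE); apply: theta_spec_nil.
case/andP: P_pos => m_gt0 P_pos.
have [j _ [lenj _ le2]] := cp_le_cons_split S_pos P_pos m_gt0 lenE le_SP.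
have [S1_pos S2_pos] := cp_pos_take_drop j S_pos.
rewrite -(cat_take_drop j S) -lenj; apply: theta_spec_cons; rewrite ?lenj //.
by apply: IH; rewrite // cp_len_drop lenj lenE cp_len_cons addKn.
Qed.

End ColoredPartitions.

Theorem lemma1 (Gamma : finType) (c : seq Gamma) (sg pi : cpart Gamma) :
  is_cpart c sg -> is_cpart c pi -> cp_le sg pi ->
  exists theta : cpart Gamma -> seq (cpart Gamma),
    [/\ (forall L, in_interval c sg pi L -> in_prodY sg pi (theta L)),
        (forall L M, in_interval c sg pi L -> in_interval c sg pi M ->
           theta L = theta M -> L = M),
        (forall Ls, in_prodY sg pi Ls ->
           exists2 L, in_interval c sg pi L & theta L = Ls),
        (forall L M, in_interval c sg pi L -> in_interval c sg pi M ->
           cp_le L M = prod_le (theta L) (theta M)) &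
        (forall L, in_interval c sg pi L ->
           cp_colors L = flatten (map (@cp_colors Gamma) (theta L)))].
Proof.
move=> sg_cp pi_cp le_sg_pi.
have intE L := in_intervalE L sg_cp pi_cp.
have [sg_pos pi_pos lenE] : [/\ cp_pos sg, cp_pos pi & cp_len sg = cp_len pi].
  by move: sg_cp pi_cp; rewrite !is_cpartE => /and3P[-> /eqP -> _] /and3P[-> /eqP -> _].
have [to_prod from_prod theta_le theta_colors] := theta_spec_of_le sg_pos pi_pos lenE le_sg_pi.
exists (theta sg pi); split.
- by move=> L; rewrite intE => /to_prod[].
- move=> L M; rewrite !intE => /to_prod[_ KL] /to_prod[_ KM] thetaE.
  by rewrite -KL -KM thetaE.
- by move=> Ls /from_prod[intL K]; exists (theta_inv sg pi Ls); rewrite ?intE.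
- by move=> L M; rewrite !intE; apply: theta_le.
by move=> L; rewrite intE; apply: theta_colors.
Qed.
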